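(* For each $n\in\mathbb{N}$ let $A_n\subseteq\mathcal{R}$ be L-measurable, and suppose $\lim_{N\to\infty}M\big(\bigcap_{n=1}^N A_n\big)$ exists in $\mathcal{R}$. Let $X\subseteq\mathcal{R}$ be outer measurable. Then $X\cap\bigcap_{n=1}^\infty A_n$ is outer measurable, the limit $\lim_{N\to\infty}M_u\big(X\cap\bigcap_{n=1}^N A_n\big)$ exists in $\mathcal{R}$, and $$\lim_{N\to\infty}M_u\Big(X\cap\bigcap_{n=1}^N A_n\Big)=M_u\Big(X\cap\bigcap_{n=1}^\infty A_n\Big).$$
   Context: $\mathcal{R}$ denotes the Levi-Civita field: functions $x:\mathbb{Q}\to\mathbb{R}$ with left-finite support, with componentwise addition and formal power series multiplication, ordered by $x>0$ iff $x\ne0$ and $x[\min\operatorname{supp}x]>0$; it is a non-Archimedean ordered field extension of $\mathbb{R}$, Cauchy complete in the order topology, in which all limits and series are taken (a series $\sum a_n$ converges iff $a_n\to0$). An interval is a set $[a,b],[a,b),(a,b]$ or $(a,b)$ with $a<b$ in $\mathcal{R}$, of length $l=b-a$. A cover of $A\subseteq\mathcal{R}$ is a sequence of intervals $(S_n)_{n\ge1}$ with $A\subseteq\bigcup_n S_n$ and $\sum_n l(S_n)$ convergent in $\mathcal{R}$. $A$ is called outer measurable if the infimum $\inf\{\sum_n l(S_n): (S_n)\text{ a cover of }A\}$ exists in $\mathcal{R}$; this infimum is then called the outer measure $M_u(A)$. An outer measurable set $A\subseteq\mathcal{R}$ is L-measurable if for every outer measurable $B\subseteq\mathcal{R}$ both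 $A\cap B$ and $A^c\cap B$ (where $A^c=\mathcal{R}\setminus A$) are outer measurable and $M_u(B)=M_u(A\cap B)+M_u(A^c\cap B)$; then its L-measure is $M(A):=M_u(A)$. Finite intersections of L-measurable sets are L-measurable, so $M(\bigcap_{n=1}^N A_n)$ is defined. *)

From Stdlib Require Import ClassicalEpsilon.
From mathcomp Require Import all_boot all_order all_algebra.
From mathcomp Require Import all_classical all_reals.
From mathcomp Require Import Rstruct.
From Stdlib Require Rdefinitions.
Notation R := Rdefinitions.R.
Import GRing.Theory Num.Theory.

Set Implicit Arguments.
Unset Strict Implicit.
Unset Printing Implicit Defensive.

Local Open Scope ring_scope.
Local Open Scope classical_set_scope.

Definition left_finite (x : rat -> R) : Prop :=
  forall q : rat, finite_set [set r : rat | (r < q)%O /\ x r != 0].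

Record LC := MkLC { lc : rat -> R ; lcP : left_finite lc }.

Lemma left_finite0 : left_finite (fun _ => 0).
Proof.
move=> q; apply: (@sub_finite_set _ _ set0); last exact: finite_set0.
by move=> r [_ /eqP].
Qed.

Lemma left_finite_add (x y : rat -> R) :
  left_finite x -> left_finite y -> left_finite (fun q => x q + y q).
Proof.
move=> hx hy q.
apply: (@sub_finite_set _ _ ([set r | (r < q)%O /\ x r != 0] `|`
                              [set r | (r < q)%O /\ y r != 0])).
  move=> r [rq]; have [x0|x0] := eqVneq (x r) 0.
    by rewrite x0 add0r => y0; right.
  by move=> _; left.
by rewrite finite_setU; split.
Qed.

Lemma left_finite_opp (x : rat -> R) :
  left_finite x -> left_finite (fun q => - x q).
Proof.
move=> hx q; apply: (@sub_finite_set _ _ [set r | (r < q)%O /\ x r != 0]).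
  by move=> r [rq]; rewrite oppr_eq0.
exact: hx.
Qed.

Definition lc0 : LC := MkLC left_finite0.
Definition lc_add (x y : LC) : LC := MkLC (left_finite_add (lcP x) (lcP y)).
Definition lc_opp (x : LC) : LC := MkLC (left_finite_opp (lcP x)).
Definition lc_sub (x y : LC) : LC := lc_add x (lc_opp y).

Definition lc_pos (x : LC) : Prop :=
  exists q : rat, 0 < lc x q /\ forall r : rat, (r < q)%O -> lc x r = 0.
Definition lc_lt (x y : LC) : Prop := lc_pos (lc_sub y x).
Definition lc_le (x y : LC) : Prop := x = y \/ lc_lt x y.

(* Convergence of a sequence in the order topology (open intervals form a base). *)
Definition lc_cvg (u : nat -> LC) (l : LC) : Prop :=
  forall b c : LC, lc_lt b l -> lc_lt l c ->
    exists N : nat, forall n : nat, (N <= n)%N -> lc_lt b (u n) /\ lc_lt (u n) c.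

Fixpoint lc_psum (u : nat -> LC) (N : nat) : LC :=
  match N with
  | O => lc0
  | S N' => lc_add (lc_psum u N') (u N')
  end.

Definition lc_series_to (u : nat -> LC) (l : LC) : Prop := lc_cvg (lc_psum u) l.

(* Intervals [a,b], [a,b), (a,b], (a,b): endpoints plus closedness flags;
   the condition a < b is imposed where intervals are used (in covers). *)
Record interval := Itv { ia : LC ; ib : LC ; lclosed : bool ; rclosed : bool }.

Definition in_itv (I : interval) (x : LC) : Prop :=
  (if lclosed I then lc_le (ia I) x else lc_lt (ia I) x) /\
  (if rclosed I then lc_le x (ib I) else lc_lt x (ib I)).

Definition itv_len (I : interval) : LC := lc_sub (ib I) (ia I).

(* (S n)_n is a cover of A (indices start at 0 instead of 1) *)
Definition is_cover (A : set LC) (S : nat -> interval) : Prop :=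
  (forall n, lc_lt (ia (S n)) (ib (S n))) /\
  A `<=` (\bigcup_n [set x | in_itv (S n) x]) /\
  (exists l, lc_series_to (fun n => itv_len (S n)) l).

Definition cover_sums (A : set LC) : set LC :=
  [set s | exists S, is_cover A S /\ lc_series_to (fun n => itv_len (S n)) s].

Definition is_inf (E : set LC) (m : LC) : Prop :=
  (forall x, E x -> lc_le m x) /\
  (forall m', (forall x, E x -> lc_le m' x) -> lc_le m' m).

Definition outer_measurable (A : set LC) : Prop := exists m, is_inf (cover_sums A) m.

(* outer measure M_u(A) (meaningful when A is outer measurable) *)
Definition Mu (A : set LC) : LC :=
  epsilon (inhabits lc0) (fun m => is_inf (cover_sums A) m).

Definition L_measurable (A : set LC) : Prop :=
  outer_measurable A /\
  forall B : set LC, outer_measurable B ->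
    outer_measurable (A `&` B) /\ outer_measurable (~` A `&` B) /\
    Mu B = lc_add (Mu (A `&` B)) (Mu (~` A `&` B)).

Definition M (A : set LC) : LC := Mu A.

(* The Levi-Civita field carries no Archimedean structure, but its order
   topology is governed by coefficients: a sequence converges to l iff, for
   every rational p, its terms eventually agree with l on all exponents
   r <= p.  We first equip LC with its additive group structure and derive
   the order facts we need from the definition of positivity, then prove this
   coefficientwise description of convergence, the Cauchy completeness of LC
   and the elementary theory of series with nonnegative terms.

   The main result is proved for a decreasing sequence B of L-measurable sets
   whose measures converge.  The differences Mu (X & B N) - Mu (X & B N.+1)
   are dominated by M (B N) - M (B N.+1), so Mu (X & B N) is Cauchy, hence
   converges to some a.  Every lower bound of the cover sums of X & \bigcap B
   bounds each Mu (X & B N) and is thus below a.  Conversely, the points of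
   X & B N outside \bigcap B lie in the shells B K \ B K.+1 (K >= N), whose
   measures tend to 0; their covers merge into a cover of total length c,
   negligible for N large, so a cover sum s of X & \bigcap B gives
   a <= Mu (X & B N) <= s + c, which rules out s < a.  Hence a is the outer
   measure of X & \bigcap B.  Lemma 4.2 is the case B N = A 0 & ... & A N. *)
From Pilot Require Import Defs.
From HB Require Import structures.
From Stdlib Require Import ClassicalEpsilon Lia.
From Stdlib Require Cantor.
From mathcomp Require Import all_boot all_order all_algebra.
From mathcomp Require Import all_classical.
From mathcomp Require Import Rstruct ring lra.
Import GRing.Theory Num.Theory Order.TTheory.

Set Implicit Arguments.
Unset Strict Implicit.
Unset Printing Implicit Defensive.

Local Open Scope classical_set_scope.
Local Open Scope ring_scope.

Lemma lc_ext (x y : LC) : lc x = lc y -> x = y.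
Proof.
case: x => fx px; case: y => fy py /= E; subst fy.
by rewrite (Prop_irrelevance px py).
Qed.

HB.instance Definition _ := gen_eqMixin LC.
HB.instance Definition _ := gen_choiceMixin LC.

Lemma lc_addA : associative lc_add.
Proof. by move=> x y z; apply: lc_ext; apply: funext => q /=; rewrite addrA. Qed.

Lemma lc_addC : commutative lc_add.
Proof. by move=> x y; apply: lc_ext; apply: funext => q /=; rewrite addrC. Qed.

Lemma lc_add0 : left_id lc0 lc_add.
Proof. by move=> x; apply: lc_ext; apply: funext => q /=; rewrite add0r. Qed.

Lemma lc_addN : left_inverse lc0 lc_opp lc_add.
Proof. by move=> x; apply: lc_ext; apply: funext => q /=; rewrite addNr. Qed.

HB.instance Definition _ :=
  GRing.isZmodule.Build LC lc_addA lc_addC lc_add0 lc_addN.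

Lemma lcD (x y : LC) r : lc (x + y) r = lc x r + lc y r. Proof. by []. Qed.
Lemma lcB (x y : LC) r : lc (x - y) r = lc x r - lc y r. Proof. by []. Qed.
Lemma lc0E r : lc 0 r = 0. Proof. by []. Qed.

Ltac lc_ring := apply: lc_ext; apply: funext => ?; rewrite /=; ring.

Lemma seq_min (s : seq rat) x : x \in s ->
  exists2 m, m \in s & forall y, y \in s -> (m <= y)%O.
Proof.
elim: s x => [//|a s IH] x _.
case: s IH => [|b s] IH.
  by exists a; rewrite ?inE // => y; rewrite inE => /eqP ->.
have [m ms mmin] := IH b (mem_head _ _).
case: (leP a m) => am.
  exists a; first exact: mem_head.
  by move=> y; rewrite inE => /orP [/eqP ->//|/mmin]; apply: le_trans.
exists m; first by rewrite inE ms orbT.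
by move=> y; rewrite inE => /orP [/eqP ->|/mmin //]; apply: ltW.
Qed.

(* A nonzero element has a least exponent with nonzero coefficient; this is
   where left-finiteness of the support is used. *)
Lemma min_support (x : LC) : x <> 0 ->
  exists q, lc x q != 0 /\ forall r, (r < q)%O -> lc x r = 0.
Proof.
move=> x0.
have [r xr] : exists r, lc x r != 0.
  apply: contrapT => H; apply: x0; apply: lc_ext; apply: funext => r /=.
  by apply/eqP; apply: contrapT => /negP h; apply: H; exists r.
have := lcP x (r + 1); rewrite finite_seqP => -[s Es].
have rs : r \in s.
  have : [set` s] r by rewrite -Es; split => //; rewrite ltrDl.
  by [].
have [m ms mmin] := seq_min rs.
have : [set` s] m by [].
rewrite -Es => -[mr xm]; exists m; split => // r' r'm.
apply/eqP; apply: contrapT => /negP h.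
have : [set` s] r' by rewrite -Es; split => //; exact: lt_trans r'm mr.
by move=> /mmin; rewrite leNgt r'm.
Qed.

Lemma pos_dec (x : LC) : x = 0 \/ lc_pos x \/ lc_pos (- x).
Proof.
have [->|x0] := pselect (x = 0); first by left.
right; have [q [xq xr]] := min_support x0.
case: (ltgtP (lc x q) 0) => h; last by rewrite h eqxx in xq.
  right; exists q; split; first by rewrite /= oppr_gt0.
  by move=> r rq; rewrite /= xr // oppr0.
by left; exists q.
Qed.

Lemma pos_add (x y : LC) : lc_pos x -> lc_pos y -> lc_pos (x + y).
Proof.
move=> [q1 [x1 xr]] [q2 [y2 yr]].
case: (ltgtP q1 q2) => h.
- exists q1; split; first by rewrite lcD (yr _ h) addr0.
  by move=> r rq; rewrite lcD xr // yr ?addr0 //; apply: lt_trans rq h.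
- exists q2; split; first by rewrite lcD (xr _ h) add0r.
  by move=> r rq; rewrite lcD yr // xr ?addr0 //; apply: lt_trans rq h.
- subst q2; exists q1; split; first by rewrite lcD addr_gt0.
  by move=> r rq; rewrite lcD xr ?yr ?addr0.
Qed.

Lemma pos_0 : ~ lc_pos 0.
Proof. by move=> [q [h _]]; rewrite lc0E ltxx in h. Qed.

Notation "x <: y" := (lc_lt x y) (at level 70).
Notation "x <=: y" := (lc_le x y) (at level 70).

Lemma ltE (x y : LC) : (x <: y) = lc_pos (y - x). Proof. by []. Qed.

Lemma lt_trans_lc (x y z : LC) : x <: y -> y <: z -> x <: z.
Proof. by rewrite !ltE => h1 h2; have := pos_add h2 h1; rewrite addrA subrK. Qed.

Lemma lt_irr_lc (x : LC) : ~ x <: x.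
Proof. by rewrite ltE subrr; apply: pos_0. Qed.

Lemma lt_total_lc (x y : LC) : x <: y \/ x = y \/ y <: x.
Proof.
rewrite !ltE; case: (pos_dec (y - x)) => [/eqP|[h|h]].
- by rewrite subr_eq0 => /eqP ->; right; left.
- by left.
- by right; right; rewrite -opprB.
Qed.

Lemma le_trans_lc (x y z : LC) : x <=: y -> y <=: z -> x <=: z.
Proof.
case=> [->//|h1] [<-|h2]; first by right.
by right; apply: lt_trans_lc h1 h2.
Qed.

Lemma le_lt_trans_lc (x y z : LC) : x <=: y -> y <: z -> x <: z.
Proof. by case=> [->//|h1] h2; apply: lt_trans_lc h1 h2. Qed.

Lemma lt_le_trans_lc (x y z : LC) : x <: y -> y <=: z -> x <: z.
Proof. by move=> h1 [<-//|h2]; apply: lt_trans_lc h1 h2. Qed.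

Lemma lt_le_false_lc (x y : LC) : x <: y -> y <=: x -> False.
Proof. by move=> h1 h2; apply: (lt_irr_lc (lt_le_trans_lc h1 h2)). Qed.

Lemma le_anti_lc (x y : LC) : x <=: y -> y <=: x -> x = y.
Proof. by case=> [//|h1] h2; case: (lt_le_false_lc h1 h2). Qed.

Lemma not_lt_le_lc (x y : LC) : ~ x <: y -> y <=: x.
Proof. by case: (lt_total_lc x y) => [//|[->|h]] _; [left|right]. Qed.

Lemma ltD2r_lc (z x y : LC) : x <: y -> x + z <: y + z.
Proof. by rewrite !ltE opprD addrACA subrr addr0. Qed.

Lemma leD2r_lc (z x y : LC) : x <=: y -> x + z <=: y + z.
Proof. by case=> [->|h]; [left|right; apply: ltD2r_lc]. Qed.

Lemma leD_lc (x y x' y' : LC) : x <=: y -> x' <=: y' -> x + x' <=: y + y'.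
Proof.
move=> h1 h2; apply: (@le_trans_lc _ (y + x')); first exact: leD2r_lc.
by rewrite (addrC y) (addrC y); apply: leD2r_lc.
Qed.

Lemma ltD_lc (x y x' y' : LC) : x <: y -> x' <=: y' -> x + x' <: y + y'.
Proof.
move=> h1 h2; apply: (@lt_le_trans_lc _ (y + x')); first exact: ltD2r_lc.
by rewrite (addrC y) (addrC y); apply: leD2r_lc.
Qed.

Lemma subr_ge0_lc (x y : LC) : (0 <=: y - x) <-> (x <=: y).
Proof.
split; last by case=> [->|h]; [left; rewrite subrr|right; rewrite ltE subr0].
case=> [/esym/eqP|h]; last by right; rewrite ltE -(subr0 (y - x)).
by rewrite subr_eq0 => /eqP ->; left.
Qed.

Lemma subr_gt0_lc (x y : LC) : x <: y -> 0 <: y - x.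
Proof. by rewrite !ltE subr0. Qed.

(* Coefficientwise comparison.  [vanishes p x]: all coefficients of x of
   exponent at most p are zero, i.e. x is infinitely small compared to the
   scale d^p.  [agree p x y]: x and y have the same coefficients up to p.
   [lead_pos q z]: q is the least exponent of z and its coefficient is
   positive; by definition lc_pos z means exists q, lead_pos q z. *)
Definition vanishes (p : rat) (x : LC) := forall r, (r <= p)%O -> lc x r = 0.
Definition agree (p : rat) (x y : LC) := forall r, (r <= p)%O -> lc x r = lc y r.
Definition lead_pos (q : rat) (z : LC) :=
  0 < lc z q /\ forall r, (r < q)%O -> lc z r = 0.

Lemma agree_subr p x y : agree p x y <-> vanishes p (x - y).
Proof.
split=> h r rp; first by rewrite lcB h // subrr.
by apply/eqP; rewrite -subr_eq0 -lcB h.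
Qed.

Lemma vanishesD p x y : vanishes p x -> vanishes p y -> vanishes p (x + y).
Proof. by move=> hx hy r rp; rewrite lcD hx ?hy ?addr0. Qed.

Lemma vanishesN p x : vanishes p x -> vanishes p (- x).
Proof. by move=> hx r rp; rewrite /= hx ?oppr0. Qed.

Lemma lead_pos_agree q z w : lead_pos q z -> agree q w z -> lead_pos q w.
Proof.
move=> [zq zr] h; split; first by rewrite h.
by move=> r rq; rewrite h ?zr // ltW.
Qed.

Lemma pos_coef_ge0 y m : lc_pos y -> (forall r, (r < m)%O -> lc y r = 0) ->
  0 <= lc y m.
Proof.
move=> [q [yq yr]] hm; case: (ltgtP q m) => h.
- by rewrite hm // ltxx in yq.
- by rewrite yr.
- by rewrite -h ltW.
Qed.

Lemma vanishes_lt x z q : vanishes q x -> lead_pos q z -> x <: z.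
Proof.
move=> hx hz; rewrite ltE; exists q.
by apply: lead_pos_agree hz _ => r rq; rewrite lcB hx // subr0.
Qed.

Lemma vanishes_le x y p : 0 <=: x -> x <=: y -> vanishes p y -> vanishes p x.
Proof.
case=> [<-//|]; rewrite ltE subr0 => -[m [xm xr]] hxy hy.
suff mp : (p < m)%O by move=> r rp; apply: xr; apply: le_lt_trans rp mp.
rewrite ltNge; apply/negP => mp; case: hxy => [E|].
  by move: xm; rewrite E hy // ltxx.
rewrite ltE => /(pos_coef_ge0 (m := m)); rewrite lcB hy // sub0r oppr_ge0 => H.
have : lc x m <= 0.
  by apply: H => r rm; rewrite lcB hy ?xr ?subr0 //; apply: ltW; apply: lt_le_trans rm mp.
by rewrite leNgt xm.
Qed.

Definition dpow_coef (p : rat) : rat -> R := fun r => if r == p then 1 else 0.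

Lemma dpow_left_finite p : left_finite (dpow_coef p).
Proof.
move=> q; apply: (@sub_finite_set _ _ [set p]); last exact: finite_set1.
by move=> r [_]; rewrite /dpow_coef /=; have [->|_] := eqVneq r p; rewrite ?eqxx.
Qed.

Definition dpow (p : rat) : LC := MkLC (dpow_left_finite p).

Lemma dpow_lead p : lead_pos p (dpow p).
Proof.
split; first by rewrite /= /dpow_coef eqxx ltr01.
by move=> r rp; rewrite /= /dpow_coef lt_eqF.
Qed.

Lemma dpow_gt0 p : 0 <: dpow p.
Proof. by rewrite ltE subr0; exists p; apply: dpow_lead. Qed.

Lemma vanishes_below_dpow x p : 0 <=: x -> x <: dpow p ->
  forall r, (r < p)%O -> lc x r = 0.
Proof.
case=> [<-//|]; rewrite ltE subr0 => -[m [xm xr]] hd.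
suff pm : (p <= m)%O by move=> r rp; apply: xr; apply: lt_le_trans rp pm.
rewrite leNgt; apply/negP => mp.
have := pos_coef_ge0 (m := m) hd.
rewrite lcB /= /dpow_coef (lt_eqF mp) sub0r oppr_ge0 => H.
have : lc x m <= 0.
  apply: H => r rm.
  by rewrite /dpow_coef lt_eqF ?xr ?subr0 //; apply: lt_trans rm mp.
by rewrite leNgt xm.
Qed.

Lemma half_pos d : 0 <: d -> exists e, 0 <: e /\ e + e <: d.
Proof.
rewrite ltE subr0 => -[q mq].
exists (dpow (q + 1)); split; first exact: dpow_gt0.
apply: (vanishes_lt (q := q)) => // r rq; rewrite lcD /= /dpow_coef.
have -> : (r == q + 1) = false.
  by apply: lt_eqF; apply: le_lt_trans rq _; rewrite ltrDl.
by rewrite addr0.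
Qed.

(* [stabilizes u l]: for every p, the terms of u eventually agree with l up
   to p.  This is convergence in the order topology of LC. *)
Definition stabilizes (u : nat -> LC) (l : LC) :=
  forall p, exists N, forall n, (N <= n)%N -> agree p (u n) l.

Lemma stabilizes_cvg u l : stabilizes u l -> lc_cvg u l.
Proof.
move=> hs b c; rewrite !ltE => -[q1 m1] [q2 m2].
have [N hN] := hs (Order.max q1 q2).
exists N => n /hN hn; split; rewrite ltE.
- exists q1; apply: lead_pos_agree m1 _ => r rq.
  by rewrite !lcB (hn r) //; apply: le_trans rq _; rewrite le_max lexx.
- exists q2; apply: lead_pos_agree m2 _ => r rq.
  by rewrite !lcB (hn r) //; apply: le_trans rq _; rewrite le_max lexx orbT.
Qed.

(* Conversely, a convergent sequence eventually lies in (l - d^(p+1),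
   l + d^(p+1)), which forces agreement with l up to p. *)
Lemma cvg_stabilizes u l : lc_cvg u l -> stabilizes u l.
Proof.
move=> hc p; set e := dpow (p + 1).
have e_pos : lc_pos e by exists (p + 1); apply: dpow_lead.
have hb : l - e <: l by rewrite ltE opprB addrC subrK.
have hc' : l <: l + e by rewrite ltE (addrC l) addrK.
have [N hN] := hc _ _ hb hc'.
exists N => n /hN [h1 h2]; apply/agree_subr => r rp.
set x := u n - l.
have hx1 : lc_pos (x + e) by rewrite (_ : x + e = u n - (l - e)) //; rewrite /x; lc_ring.
have hx2 : lc_pos (e - x) by rewrite (_ : e - x = l + e - u n) //; rewrite /x; lc_ring.
apply/eqP; apply: contrapT => /negP xr.
have x0 : x <> 0 by move=> E; move: xr; rewrite E lc0E eqxx.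
have [m [xm xlow]] := min_support x0.
have mr : (m <= r)%O by rewrite leNgt; apply/negP => /xlow; apply/eqP.
have mp : (m < p + 1)%O.
  by apply: le_lt_trans mr _; apply: le_lt_trans rp _; rewrite ltrDl.
have elow : forall r', (r' <= m)%O -> lc e r' = 0.
  by move=> r' r'm; rewrite /= /dpow_coef lt_eqF //; apply: le_lt_trans r'm mp.
have P1 : 0 <= lc x m.
  have := pos_coef_ge0 (m := m) hx1; rewrite lcD elow // addr0; apply => r' r'm.
  by rewrite lcD elow ?xlow ?addr0 //; exact: ltW.
have P2 : lc x m <= 0.
  have := pos_coef_ge0 (m := m) hx2; rewrite lcB elow // sub0r oppr_ge0; apply => r' r'm.
  by rewrite lcB elow ?xlow ?subr0 //; exact: ltW.
by move: xm; rewrite (@le_anti _ _ (lc x m) 0) ?eqxx // P1 P2.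
Qed.

(* Cauchy completeness: a sequence that is eventually constant up to each
   exponent has a limit, read off coefficient by coefficient. *)
Lemma cauchy_stabilizes (u : nat -> LC) :
  (forall p, exists N, forall n, (N <= n)%N -> agree p (u n) (u N)) ->
  exists l, stabilizes u l.
Proof.
move=> hc; have [Nf hNf] := choice hc.
have key : forall q r, (r <= q)%O -> lc (u (Nf r)) r = lc (u (Nf q)) r.
  move=> q r rq; set n := maxn (Nf q) (Nf r).
  by rewrite -(hNf r n (leq_maxr _ _) r (lexx _)) (hNf q n (leq_maxl _ _) r rq).
pose L := fun r => lc (u (Nf r)) r.
have lf : left_finite L.
  move=> q; apply: (@sub_finite_set _ _ [set r | (r < q)%O /\ lc (u (Nf q)) r != 0]).
    by move=> r [rq]; rewrite /L (key q) // ltW.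
  exact: lcP.
exists (MkLC lf) => p; exists (Nf p) => n hn r rp.
by rewrite /= /L (key p) // (hNf p n hn r rp).
Qed.

Lemma stabilizes_le u v a b : stabilizes u a -> stabilizes v b ->
  (exists N, forall n, (N <= n)%N -> u n <=: v n) -> a <=: b.
Proof.
move=> ha hb [N hN]; apply: not_lt_le_lc; rewrite ltE => -[q mq].
have [N1 h1] := ha q; have [N2 h2] := hb q.
set n := maxn N (maxn N1 N2).
have hn1 : (N1 <= n)%N by rewrite /n leq_max leq_maxl orbT.
have hn2 : (N2 <= n)%N by rewrite /n leq_max leq_maxr orbT.
apply: (lt_le_false_lc _ (hN n (leq_maxl _ _))); rewrite ltE; exists q.
by apply: lead_pos_agree mq _ => r rq; rewrite !lcB (h1 n hn1) // (h2 n hn2).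
Qed.

Lemma stabilizes_cst x : stabilizes (fun=> x) x.
Proof. by move=> p; exists 0%N. Qed.

Lemma stabilizes_vanishes u l p : stabilizes u l ->
  (forall n, vanishes p (u n)) -> vanishes p l.
Proof.
move=> hs hv r rp; have [N hN] := hs p.
by rewrite -(hN N (leqnn _) r rp) hv.
Qed.

Lemma psumS u n : lc_psum u n.+1 = lc_psum u n + u n. Proof. by []. Qed.

Lemma psum_mono u m n : (forall k, 0 <=: u k) -> (m <= n)%N ->
  lc_psum u m <=: lc_psum u n.
Proof.
move=> hu /subnK <-; elim: (n - m)%N => [|k IH]; first by rewrite add0n; left.
apply: le_trans_lc IH _; rewrite addSn psumS -{1}(addr0 (lc_psum u (k + m))).
by rewrite (addrC (lc_psum _ _)) (addrC (lc_psum _ _)); apply: leD2r_lc.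
Qed.

Lemma psum_le_sum u s n : (forall k, 0 <=: u k) -> lc_series_to u s ->
  lc_psum u n <=: s.
Proof.
move=> hu /cvg_stabilizes hs; apply: stabilizes_le (stabilizes_cst _) hs _.
by exists n => k; apply: psum_mono.
Qed.

Lemma term_le_sum u s k : (forall k, 0 <=: u k) -> lc_series_to u s -> u k <=: s.
Proof.
move=> hu hs; apply: le_trans_lc (psum_le_sum k.+1 hu hs).
rewrite psumS -{1}(add0r (u k)); apply: leD2r_lc.
exact: (psum_mono hu (leq0n k)).
Qed.

(* In LC a series converges iff its terms tend to 0, i.e. eventually vanish
   up to every given exponent. *)
Lemma series_terms_vanish u s : lc_series_to u s ->
  forall p, exists N, forall n, (N <= n)%N -> vanishes p (u n).
Proof.
move=> /cvg_stabilizes hs p; have [N hN] := hs p; exists N => n hn r rp.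
have := hN n.+1 (leqW hn) r rp; rewrite psumS lcD (hN n hn r rp) => /eqP.
by rewrite -subr_eq0 addrAC subrr add0r => /eqP.
Qed.

Lemma psum_vanishes u p n : (forall k, vanishes p (u k)) ->
  vanishes p (lc_psum u n).
Proof. by move=> h; elim: n => [|n IH] //=; apply: vanishesD. Qed.

Lemma vanishing_terms_series u :
  (forall p, exists N, forall n, (N <= n)%N -> vanishes p (u n)) ->
  exists s, lc_series_to u s.
Proof.
move=> h; have [s hs] : exists s, stabilizes (lc_psum u) s.
  apply: cauchy_stabilizes => p; have [N hN] := h p; exists N => n /subnK <-.
  elim: (n - N)%N => [|k IH] r rp; first by rewrite add0n.
  by rewrite addSn psumS lcD (IH r rp) (hN (k + N)%N (leq_addl _ _) r rp) addr0.
by exists s; apply: stabilizes_cvg.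
Qed.

Definition interleave (T : Type) (u v : nat -> T) (k : nat) : T :=
  if odd k then v k./2 else u k./2.

Lemma interleave_even T (u v : nat -> T) k : interleave u v k.*2 = u k.
Proof. by rewrite /interleave odd_double doubleK. Qed.

Lemma interleave_odd T (u v : nat -> T) k : interleave u v k.*2.+1 = v k.
Proof. by rewrite /interleave /= odd_double /= uphalf_double. Qed.

Lemma psum_interleave (u v : nat -> LC) k :
  lc_psum (interleave u v) k.*2 = lc_psum u k + lc_psum v k /\
  lc_psum (interleave u v) k.*2.+1 = lc_psum u k + lc_psum v k + u k.
Proof.
elim: k => [|k [IH1 IH2]]; first by split; lc_ring.
have E : lc_psum (interleave u v) k.+1.*2 = lc_psum u k.+1 + lc_psum v k.+1.
  rewrite doubleS psumS IH2 interleave_odd !psumS; lc_ring.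
by split => //; rewrite psumS E interleave_even.
Qed.

Lemma series_interleave u v s t : lc_series_to u s -> lc_series_to v t ->
  lc_series_to (interleave u v) (s + t).
Proof.
move=> hs ht; apply: stabilizes_cvg => p.
have [N1 h1] := cvg_stabilizes hs p; have [N2 h2] := cvg_stabilizes ht p.
have [N3 h3] := series_terms_vanish hs p.
set K := maxn N1 (maxn N2 N3); exists K.*2 => n hn.
have hk : (K <= n./2)%N by rewrite -(doubleK K); apply: half_leq.
have k1 : (N1 <= n./2)%N by apply: leq_trans hk; rewrite leq_maxl.
have k2 : (N2 <= n./2)%N by apply: leq_trans hk; rewrite /K leq_max leq_maxl orbT.
have k3 : (N3 <= n./2)%N by apply: leq_trans hk; rewrite /K !leq_max leqnn !orbT.
have [P1 P2] := psum_interleave u v n./2.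
move=> r rp; have := odd_double_half n; case: (odd n) => /= <-.
- by rewrite add1n P2 !lcD (h3 _ k3 r rp) (h1 _ k1 r rp) (h2 _ k2 r rp) addr0.
- by rewrite add0n P1 lcD (h1 _ k1 r rp) (h2 _ k2 r rp).
Qed.

Lemma itv_len_gt0 (I : Defs.interval) : ia I <: ib I -> 0 <: itv_len I.
Proof. by move=> h; rewrite ltE subr0. Qed.

Lemma cover_sums_ge0 A s : cover_sums A s -> 0 <=: s.
Proof.
move=> [S [[hS _] hs]]; apply: (le_trans_lc _ (psum_le_sum 0 _ hs)); first by left.
by move=> k; right; apply: itv_len_gt0.
Qed.

Lemma cover_sums_sub A B s : A `<=` B -> cover_sums B s -> cover_sums A s.
Proof.
move=> AB [S [[h1 [h2 h3]] hs]]; exists S; do 2 split => //.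
by split => // x /AB /h2.
Qed.

Lemma cover_sums_join A B C s t : cover_sums A s -> cover_sums B t ->
  C `<=` A `|` B -> cover_sums C (s + t).
Proof.
move=> [S [[hS1 [hS2 _]] hs]] [S' [[hS1' [hS2' _]] ht]] hC.
have hT : lc_series_to (fun n => itv_len (interleave S S' n)) (s + t).
  have -> : (fun n => itv_len (interleave S S' n)) =
            interleave (fun n => itv_len (S n)) (fun n => itv_len (S' n)).
    by apply: funext => n; rewrite /interleave; case: odd.
  exact: series_interleave.
exists (interleave S S'); split => //; split.
  by move=> n; rewrite /interleave; case: (odd n).
split; last by exists (s + t).
move=> x /hC [/hS2 [n _ hn]|/hS2' [n _ hn]].
  by exists n.*2 => //; rewrite interleave_even.
by exists n.*2.+1 => //; rewrite interleave_odd.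
Qed.

(* Countably many covers are merged along the Cantor enumeration of pairs:
   [diag w n] is the entry of the double sequence w at the n-th pair. *)
Definition diag (T : Type) (w : nat -> nat -> T) (n : nat) : T :=
  w (Cantor.of_nat n).1 (Cantor.of_nat n).2.

Lemma cantor_far K0 J : exists N, forall n, (N <= n)%N ->
  (K0 <= (Cantor.of_nat n).1)%N \/ (J <= (Cantor.of_nat n).2)%N.
Proof.
exists (J + (J + K0) * (J + K0).+1)%N => n hn.
have E := Cantor.cancel_to_of n.
case: (Cantor.of_nat n) E => k j E.
have := Cantor.to_nat_spec k j; rewrite E => hs.
case: (leqP K0 k) => h1; first by left.
case: (leqP J j) => h2; first by right.
move/ssrnat.ltP: h1; move/ssrnat.ltP: h2; move/ssrnat.leP: hn.
rewrite -!plusE -!multE; nia.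
Qed.

Lemma rows_terms_vanish (w : nat -> nat -> LC) K0 p :
  (forall k, exists s, lc_series_to (w k) s) ->
  exists J, forall k, (k < K0)%N -> forall j, (J <= j)%N -> vanishes p (w k j).
Proof.
move=> hser; elim: K0 => [|K0 [J hJ]]; first by exists 0%N.
have [s hs] := hser K0; have [J' hJ'] := series_terms_vanish hs p.
exists (maxn J J') => k; rewrite ltnS leq_eqVlt => /orP [/eqP ->|hk] j hj.
  by apply: hJ'; apply: leq_trans hj; exact: leq_maxr.
by apply: hJ => //; apply: leq_trans hj; exact: leq_maxl.
Qed.

Lemma diag_series (w : nat -> nat -> LC) :
  (forall k, exists s, lc_series_to (w k) s) ->
  (forall p, exists K, forall k, (K <= k)%N -> forall j, vanishes p (w k j)) ->
  exists c, lc_series_to (diag w) c.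
Proof.
move=> hser hvan; apply: vanishing_terms_series => p.
have [K0 hK0] := hvan p; have [J hJ] := rows_terms_vanish K0 p hser.
have [N hN] := cantor_far K0 J.
exists N => n /hN [h|h]; first exact: hK0.
by case: (leqP K0 (Cantor.of_nat n).1) => h'; [apply: hK0 | apply: hJ].
Qed.

Lemma cover_sums_bigjoin (F : nat -> nat -> Defs.interval) (C : set LC) (p0 : rat) :
  (forall k j, ia (F k j) <: ib (F k j)) ->
  (forall k, exists s, lc_series_to (fun j => itv_len (F k j)) s) ->
  (forall p, exists K, forall k, (K <= k)%N -> forall j, vanishes p (itv_len (F k j))) ->
  (forall x, C x -> exists k j, Defs.in_itv (F k j) x) ->
  (forall k j, vanishes p0 (itv_len (F k j))) ->
  exists c, cover_sums C c /\ vanishes p0 c.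
Proof.
move=> hpos hser hvan hcov hv0.
have [c hc] := diag_series hser hvan.
exists c; split.
  exists (diag F); split => //; split; first by move=> n; apply: hpos.
  split; last by exists c.
  move=> x /hcov [k [j hj]]; exists (Cantor.to_nat (k, j)) => //.
  by rewrite /diag Cantor.cancel_of_to.
apply: stabilizes_vanishes (cvg_stabilizes hc) _ => n.
by apply: psum_vanishes => k; apply: hv0.
Qed.

Lemma Mu_spec A : outer_measurable A -> is_inf (cover_sums A) (Mu A).
Proof. by move=> h; apply: epsilon_spec. Qed.

Lemma Mu_eq A m : is_inf (cover_sums A) m -> Mu A = m.
Proof.
move=> hm; have [h1 h2] := Mu_spec (ex_intro _ m hm).
by apply: le_anti_lc; [apply: hm.2 | apply: h2 hm.1].
Qed.

Lemma Mu_ge0 A : outer_measurable A -> 0 <=: Mu A.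
Proof. by move=> /Mu_spec [_ h]; apply: h => s /cover_sums_ge0. Qed.

Lemma Mu_lb A s : outer_measurable A -> cover_sums A s -> Mu A <=: s.
Proof. by move=> /Mu_spec [h _]; apply: h. Qed.

Lemma Mu_mono A B : A `<=` B -> outer_measurable A -> outer_measurable B ->
  Mu A <=: Mu B.
Proof.
move=> AB hA hB; apply: (Mu_spec hB).2 => s hs.
by apply: Mu_lb hA _; apply: cover_sums_sub hs.
Qed.

Lemma Mu_approx E d : outer_measurable E -> 0 <: d ->
  exists s, cover_sums E s /\ s <: Mu E + d.
Proof.
move=> hE hd; apply: contrapT => H.
have : Mu E + d <=: Mu E.
  apply: (Mu_spec hE).2 => s hs; apply: not_lt_le_lc => hlt.
  by apply: H; exists s.
apply: lt_le_false_lc.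
by rewrite -{1}(addr0 (Mu E)) (addrC (Mu E)) (addrC (Mu E)); apply: ltD2r_lc.
Qed.

(* A cover of E whose total length is within d^r of Mu E: each of its
   lengths vanishes up to every p < r up to which Mu E vanishes. *)
Lemma fine_cover E (r : rat) : outer_measurable E ->
  exists S, is_cover E S /\
    forall p j, (p < r)%O -> vanishes p (Mu E) -> vanishes p (itv_len (S j)).
Proof.
move=> hE; have [t [[S [hS ht]] tlt]] := Mu_approx hE (dpow_gt0 r).
exists S; split => // p j pr hp.
have len_ge0 k : 0 <=: itv_len (S k) by right; apply: itv_len_gt0; apply: hS.1.
apply: vanishes_le (len_ge0 j) (term_le_sum j len_ge0 ht) _.
have t_ge0 : 0 <=: t - Mu E.
  by apply/subr_ge0_lc; apply: Mu_lb hE _; exists S.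
have t_lt : t - Mu E <: dpow r.
  by have := ltD2r_lc (- Mu E) tlt; rewrite (addrC (Mu E)) addrK.
rewrite -(subrK (Mu E) t); apply: vanishesD => // q qp.
by apply: vanishes_below_dpow t_ge0 t_lt _ _; apply: le_lt_trans qp pr.
Qed.

(* Countable subadditivity, in the form needed here: a subset of a union of
   sets whose measures vanish up to p0, and tend to 0, has a cover whose total
   length vanishes up to p0. *)
Lemma cover_sums_union (E : nat -> set LC) (C : set LC) (p0 : rat) :
  (forall k, outer_measurable (E k)) ->
  (forall k, vanishes p0 (Mu (E k))) ->
  (forall p, exists K, forall k, (K <= k)%N -> vanishes p (Mu (E k))) ->
  C `<=` \bigcup_k E k ->
  exists c, cover_sums C c /\ vanishes p0 c.
Proof.
move=> hE hv0 hvan hC; pose r k : rat := p0 + k.+1%:R.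
have p0r k : (p0 < r k)%O by rewrite /r ltrDl ltr0n.
have [F hF] := choice (fun k => fine_cover (r k) (hE k)).
apply: (@cover_sums_bigjoin F) => [k j|k|p|x /hC [k _ /(hF k).1.2.1 [j _ hj]]|k j].
- exact: (hF k).1.1.
- exact: (hF k).1.2.2.
- have [K hK] := hvan p; exists (maxn K (Num.Def.truncn (p - p0)).+1) => k hk j.
  apply: (hF k).2; last by apply: hK; apply: leq_trans hk; apply: leq_maxl.
  have hk' : ((Num.Def.truncn (p - p0)).+1 <= k.+1)%N.
    by apply: leqW; apply: leq_trans hk; apply: leq_maxr.
  have := truncnS_gt (p - p0); rewrite -(ler_nat rat) in hk'.
  by rewrite /r; lra.
- by exists k, j.
- exact: (hF k).2 (p0r k) (hv0 k).
Qed.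

Lemma Mu_subadd P Q F m' : outer_measurable P -> outer_measurable Q ->
  F `<=` P `|` Q -> (forall s, cover_sums F s -> m' <=: s) -> m' <=: Mu P + Mu Q.
Proof.
move=> hP hQ hF hm'; apply: not_lt_le_lc => hlt.
have [e [e0 ee]] := half_pos (subr_gt0_lc hlt).
have [t1 [ht1 t1lt]] := Mu_approx hP e0.
have [t2 [ht2 t2lt]] := Mu_approx hQ e0.
apply: (lt_le_false_lc _ (hm' _ (cover_sums_join ht1 ht2 hF))).
apply: (@lt_trans_lc _ (Mu P + e + (Mu Q + e))); first exact: ltD_lc t1lt (or_intror t2lt).
rewrite (_ : Mu P + e + (Mu Q + e) = e + e + (Mu P + Mu Q)); last by lc_ring.
by rewrite -(subrK (Mu P + Mu Q) m'); apply: ltD2r_lc.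
Qed.

(* If Mu E = Mu G + t and F | G covers E, then t is below every cover sum of
   F: otherwise a cover of F and a fine cover of G would cover E with total
   length below Mu E. *)
Lemma Mu_excess E G F t : outer_measurable E -> outer_measurable G ->
  Mu E = Mu G + t -> E `<=` F `|` G -> forall s, cover_sums F s -> t <=: s.
Proof.
move=> hE hG eE hEFG s hs; apply: not_lt_le_lc => hlt.
have [t' [ht' t'lt]] := Mu_approx hG (subr_gt0_lc hlt).
apply: (lt_le_false_lc _ (Mu_lb hE (cover_sums_join hs ht' hEFG))).
rewrite eE (_ : Mu G + t = s + (Mu G + (t - s))); last by lc_ring.
by rewrite !(addrC s); apply: ltD2r_lc.
Qed.

Lemma measurable_setI A1 A2 : L_measurable A1 -> L_measurable A2 ->
  L_measurable (A1 `&` A2).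
Proof.
move=> [o1 h1] [o2 h2].
split; first by have [o _] := h2 A1 o1; rewrite setIC.
move=> E oE; have [oE1 [oE2 eE]] := h1 E oE.
have [oE11 [oE12 eE1]] := h2 (A1 `&` E) oE1.
have -> : A1 `&` A2 `&` E = A2 `&` (A1 `&` E) by rewrite setIA [A1 `&` A2]setIC.
set E11 := A2 `&` (A1 `&` E); set E12 := ~` A2 `&` (A1 `&` E).
set E2 := ~` A1 `&` E; set F := ~` (A1 `&` A2) `&` E.
have hinf : is_inf (cover_sums F) (Mu E12 + Mu E2).
  split.
  - apply: (@Mu_excess E E11) => //; first by rewrite eE eE1; lc_ring.
    move=> x Ex; have [[a1 a2]|na12] := pselect ((A1 `&` A2) x).
    + by right.
    + by left.
  - move=> m' hm'; apply: Mu_subadd hm' => // x [nA Ex].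
    have [a1|na1] := pselect (A1 x); last by right.
    by left; split => // a2; apply: nA.
split; first exact: oE11.
split; first by exists (Mu E12 + Mu E2).
by rewrite (Mu_eq hinf) eE eE1; lc_ring.
Qed.

Lemma Mu_complement A E : L_measurable A -> outer_measurable E ->
  outer_measurable (~` A `&` E) /\ Mu E - Mu (A `&` E) = Mu (~` A `&` E).
Proof.
move=> [_ hA] oE; have [_ [oC eE]] := hA E oE.
by split => //; rewrite eE; lc_ring.
Qed.

Lemma measurable_prefix_cap (A : nat -> set LC) N :
  (forall n, L_measurable (A n)) ->
  L_measurable [set x | forall n, (n <= N)%N -> A n x].
Proof.
move=> hA; elim: N => [|N IH].
  rewrite (_ : [set x | _] = A 0); first exact: hA.
  by apply/seteqP; split => x /= h; [apply: h | move=> n; rewrite leqn0 => /eqP ->].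
rewrite (_ : [set x | _] = [set x | forall n, (n <= N)%N -> A n x] `&` A N.+1).
  exact: measurable_setI.
apply/seteqP; split => x /=.
  by move=> h; split; [move=> n hn; apply: h; apply: leqW | apply: h].
by move=> [h1 h2] n; rewrite leq_eqVlt => /orP [/eqP ->|/h1].
Qed.

Section DecreasingSequence.
Variable B : nat -> set LC.
Hypothesis measB : forall N, L_measurable (B N).
Hypothesis decrB : forall N, B N.+1 `<=` B N.
Hypothesis cvgB : exists l, lc_cvg (fun N => M (B N)) l.
Variable X : set LC.
Hypothesis oX : outer_measurable X.

Local Notation Binf := [set x | forall N, B N x].
Local Notation shell N := (~` B N.+1 `&` B N).

Lemma decr_le m n : (m <= n)%N -> B n `<=` B m.
Proof.
move=> /subnK <-; elim: (n - m)%N => [|k IH] x; first by rewrite add0n.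
by rewrite addSn => /decrB /IH.
Qed.

Lemma oXB N : outer_measurable (X `&` B N).
Proof. by have [_ /(_ X oX) [o _]] := measB N; rewrite setIC. Qed.

Lemma Mu_shell N :
  outer_measurable (shell N) /\ M (B N) - M (B N.+1) = Mu (shell N).
Proof.
have -> : M (B N.+1) = Mu (B N.+1 `&` B N).
  by rewrite setIidl //; apply: decrB.
exact: Mu_complement (measB N.+1) (measB N).1.
Qed.

Lemma XB_step N : 0 <=: Mu (X `&` B N) - Mu (X `&` B N.+1) /\
  Mu (X `&` B N) - Mu (X `&` B N.+1) <=: M (B N) - M (B N.+1).
Proof.
have -> : X `&` B N.+1 = B N.+1 `&` (X `&` B N).
  by rewrite setIA [B N.+1 `&` X]setIC -setIA (setIidl (@decrB N)).
have [oC ->] := Mu_complement (measB N.+1) (oXB N).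
split; first exact: Mu_ge0.
by rewrite (Mu_shell N).2; apply: Mu_mono (Mu_shell N).1 => // x [? [_ ?]].
Qed.

Lemma XB_steps N n : (N <= n)%N -> 0 <=: Mu (X `&` B N) - Mu (X `&` B n) /\
  Mu (X `&` B N) - Mu (X `&` B n) <=: M (B N) - M (B n).
Proof.
move=> /subnK <-; elim: (n - N)%N => [|k [IH1 IH2]].
  by rewrite add0n !subrr; split; left.
have [S1 S2] := XB_step (k + N).
have E (u : nat -> LC) : u N - u (k.+1 + N)%N =
    (u N - u (k + N)%N) + (u (k + N)%N - u (k + N).+1) by rewrite addSn; lc_ring.
rewrite (E (fun n => Mu (X `&` B n))) (E (fun n => M (B n))).
split; last exact: leD_lc.
by rewrite -(addr0 0); apply: leD_lc.
Qed.

(* Mu (X & B N) is Cauchy, since its increments are dominated by those of the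
   convergent sequence M (B N); it therefore converges. *)
Lemma XB_cvg : exists a, stabilizes (fun N => Mu (X `&` B N)) a.
Proof.
have [l /cvg_stabilizes hs] := cvgB.
apply: cauchy_stabilizes => p; have [N0 hN0] := hs p; exists N0 => n hn.
have [h1 h2] := XB_steps hn.
have hv : vanishes p (M (B N0) - M (B n)).
  by move=> r rp; rewrite lcB (hN0 N0 (leqnn _) r rp) (hN0 n hn r rp) subrr.
by apply/agree_subr; rewrite -opprB; apply: vanishesN; apply: vanishes_le h1 h2 hv.
Qed.

(* The sequence Mu (X & B N) decreases, hence stays above its limit. *)
Lemma XB_limit_le a N : stabilizes (fun N => Mu (X `&` B N)) a ->
  a <=: Mu (X `&` B N).
Proof.
move=> ha; apply: stabilizes_le ha (stabilizes_cst _) _.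
by exists N => n hn; apply/subr_ge0_lc; apply: (XB_steps hn).1.
Qed.

Lemma shell_vanishes p : exists K0, forall K, (K0 <= K)%N -> vanishes p (Mu (shell K)).
Proof.
have [l /cvg_stabilizes hs] := cvgB; have [K0 hK0] := hs p.
exists K0 => K hK; rewrite -(Mu_shell K).2 => r rp.
by rewrite lcB (hK0 K hK r rp) (hK0 K.+1 (leqW hK) r rp) subrr.
Qed.

Lemma leave_shell N x : B N x -> ~ Binf x -> exists k, shell (N + k) x.
Proof.
move=> hB /existsNP [n hn].
have : ~ B (N + n) x by move=> /(decr_le (leq_addl N n)).
elim: n {hn} => [|k IH] hk; first by rewrite addn0 in hk.
have [hb|hb] := pselect (B (N + k) x); last exact: IH.
by exists k; split => //; rewrite -addnS.
Qed.

Lemma tail_cover q : exists N c,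
  cover_sums ((X `&` B N) `&` ~` Binf) c /\ vanishes q c.
Proof.
have [N hN] := shell_vanishes q; exists N.
apply: (@cover_sums_union (fun k => shell (N + k))).
- by move=> k; apply: (Mu_shell _).1.
- by move=> k; apply: hN; apply: leq_addr.
- move=> p; have [K hK] := shell_vanishes p; exists K => k hk.
  by apply: hK; apply: leq_trans hk _; apply: leq_addl.
- by move=> x [[_ hB] hnot]; have [k hk] := leave_shell hB hnot; exists k.
Qed.

Lemma XB_limit_inf a : stabilizes (fun N => Mu (X `&` B N)) a ->
  is_inf (cover_sums (X `&` Binf)) a.
Proof.
move=> ha; split => [s hs|m' hm'].
  apply: not_lt_le_lc; rewrite ltE => -[q mq].
  have [N [c [hc cvan]]] := tail_cover q.
  have hcov : cover_sums (X `&` B N) (s + c).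
    apply: cover_sums_join hs hc _ => x [hX hB].
    by have [hb|hb] := pselect (Binf x); [left | right].
  have : s + c <: a.
    by rewrite -(subrK s a) addrC; apply: ltD2r_lc; apply: vanishes_lt cvan mq.
  by move=> /lt_le_false_lc; apply; apply: le_trans_lc (XB_limit_le N ha) (Mu_lb (oXB N) hcov).
apply: stabilizes_le (stabilizes_cst _) ha _; exists 0%N => N _.
apply: (Mu_spec (oXB N)).2 => s hs; apply: hm'.
by apply: cover_sums_sub hs => x [hX hB]; split.
Qed.

Theorem Mu_decreasing_cvg : outer_measurable (X `&` Binf) /\
  lc_cvg (fun N => Mu (X `&` B N)) (Mu (X `&` Binf)).
Proof.
have [a ha] := XB_cvg; have hinf := XB_limit_inf ha.
by split; [exists a | rewrite (Mu_eq hinf); apply: stabilizes_cvg].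
Qed.

End DecreasingSequence.

Theorem lemma4p2 (A : nat -> set LC) :
  (forall n, L_measurable (A n)) ->
  (exists l : LC, lc_cvg (fun N => M [set x | forall n, (n <= N)%N -> A n x]) l) ->
  forall X : set LC, outer_measurable X ->
    outer_measurable (X `&` [set x | forall n, A n x]) /\
    lc_cvg (fun N => Mu (X `&` [set x | forall n, (n <= N)%N -> A n x]))
           (Mu (X `&` [set x | forall n, A n x])).
Proof.
move=> hA hl X oX.
pose B N := [set x | forall n, (n <= N)%N -> A n x].
have measB N : L_measurable (B N) by apply: measurable_prefix_cap.
have decrB N : B N.+1 `<=` B N by move=> x h n hn; apply: h; apply: leqW.
have -> : [set x | forall n, A n x] = [set x | forall N, B N x].
  by apply/seteqP; split => x h n; [move=> m _; apply: h | apply: (h n n)].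
exact (Mu_decreasing_cvg measB decrB hl oX).
Qed.
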